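(* Let $A$ be a finite set, $p : A \to [0,1]$, and $\gamma : \mathbb{N}^* \to (0,1]$ non-increasing; set $p_i(u) := \gamma(i)p(u)$. Let $\{X_i(u)\}_{i\ge1,u\in A}$ be independent with $X_i(u)\sim\mathrm{Bernoulli}(p_i(u))$. For $n \ge 1$ define $Z_n(u) := \mathds{1}\{X_1(u)=\dots=X_n(u)=0\}$, $R_n := \sum_{u\in A} Z_n(u)\,p_{n+1}(u)$, \[ U^\gamma_n(u) := \sum_{i=1}^n \mathds{1}\{X_i(u)=1,\ X_j(u)=0\ \forall j\in\{1,\dots,n\}\setminus\{i\}\}\,\frac{\gamma(n+1)}{\gamma(i)}, \] $\hat R_n := \frac1n\sum_{u\in A}U^\gamma_n(u)$, $\lambda := \sum_{u\in A}p(u)$ and $\lambda_m := \gamma(m)\lambda$. For $\delta\in(0,1)$ let \[ \beta_n := (1+\sqrt2)\sqrt{\frac{\lambda_{n+1}\log(4/\delta)}{n}} + \frac{1}{3n}\log\frac4\delta . \] Then with probability at least $1-\delta$, \[ -\beta_n - \frac{\lambda}{n} \le R_n - \hat R_n \le \beta_n . \]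
   Context: Influencer fatigue model: at the $i$-th selection of the influencer, node $u$ is activated with probability $\gamma(i)p(u)$, independently across nodes and selections. $R_n$ is the remaining potential for the $(n+1)$-th selection, $\hat R_n$ the reweighted Good-Turing estimator. *)

From mathcomp Require Import all_boot.
From Stdlib Require Import Reals.
Set Implicit Arguments. Unset Strict Implicit. Unset Printing Implicit Defensive.
Open Scope R_scope.

Definition Rleb (x y : R) : bool := if Rle_dec x y then true else false.

Notation "\rsum_ ( i : T ) F" := (\big[Rplus/0%R]_(i : T) F)
  (at level 41, F at level 41, i at level 50).
Notation "\rsum_ ( i : T | P ) F" := (\big[Rplus/0%R]_(i : T | P) F)
  (at level 41, F at level 41, i at level 50).
Notation "\rprod_ ( i : T ) F" := (\big[Rmult/1%R]_(i : T) F)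
  (at level 36, F at level 36, i at level 50).

Section Fatigue.
Variables (A : finType) (p : A -> R) (gamma : nat -> R).

(* p_i(u) = gamma(i) p(u); selections are indexed from 1 *)
Definition pi (i : nat) (u : A) : R := gamma i * p u.

(* An outcome of the first n selections: w (i, u) = X_{i+1}(u), i : 'I_n. *)
Definition outcome (n : nat) := {ffun 'I_n * A -> bool}.

Definition weight (n : nat) (w : outcome n) : R :=
  \rprod_(iu : 'I_n * A)
    (if w iu then pi (iu.1).+1 iu.2 else 1 - pi (iu.1).+1 iu.2).

Definition prob (n : nat) (E : outcome n -> bool) : R :=
  \rsum_(w : outcome n | E w) weight w.

Definition Zn (n : nat) (w : outcome n) (u : A) : bool :=
  [forall i : 'I_n, ~~ w (i, u)].

Definition Rn (n : nat) (w : outcome n) : R :=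
  \rsum_(u : A) (if Zn w u then pi n.+1 u else 0).

Definition Ugam (n : nat) (w : outcome n) (u : A) : R :=
  \rsum_(i : 'I_n)
    (if w (i, u) && [forall j : 'I_n, (j != i) ==> ~~ w (j, u)]
     then gamma n.+1 / gamma i.+1 else 0).

Definition Rhat (n : nat) (w : outcome n) : R :=
  / INR n * \rsum_(u : A) Ugam w u.

Definition lambda : R := \rsum_(u : A) p u.

Definition lambda_m (m : nat) : R := gamma m * lambda.

Definition beta (n : nat) (delta : R) : R :=
  (1 + sqrt 2) * sqrt (lambda_m n.+1 * ln (4 / delta) / INR n)
  + / (3 * INR n) * ln (4 / delta).

End Fatigue.

From Pilot Require Import Defs.
From mathcomp Require Import all_boot.
From Stdlib Require Import Reals Lra.
From Coquelicot Require Coquelicot.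
From HB Require Import structures.
Set Implicit Arguments. Unset Strict Implicit. Unset Printing Implicit Defensive.
Open Scope R_scope.

(** R_n - \hat R_n is a sum over the nodes u of independent variables, the contribution of u
    depending only on its own column X_1(u), ..., X_n(u): it is p_{n+1}(u) if u was never
    activated, - gamma(n+1) / (n gamma(i)) if u was activated exactly once, at selection i, and 0
    otherwise. Hence its moment generating function is an explicit finite sum. Because
    p_i(u) gamma(n+1) / gamma(i) = p_{n+1}(u), the contribution of u to the mgf of the deviation
    is at most exp (7/5 t^2 p_{n+1}(u) / n) for t >= 0, and to the mgf of the negated deviation
    at most exp ((t/n + t^2 / (n (1 - t/(3n)))) p_{n+1}(u)) for 0 <= t < 3n (a Bernstein-type
    bound). Multiplying over the nodes and choosing t in the Chernoff bound makes each of the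
    two tails at most delta/4. *)

Lemma RplusA : associative Rplus. Proof. by move=> x y z; rewrite Rplus_assoc. Qed.
Lemma RmultA : associative Rmult. Proof. by move=> x y z; rewrite Rmult_assoc. Qed.
HB.instance Definition _ := Monoid.isComLaw.Build R 0 Rplus RplusA Rplus_comm Rplus_0_l.
HB.instance Definition _ := Monoid.isComLaw.Build R 1 Rmult RmultA Rmult_comm Rmult_1_l.
HB.instance Definition _ := Monoid.isMulLaw.Build R 0 Rmult Rmult_0_l Rmult_0_r.
HB.instance Definition _ :=
  Monoid.isAddLaw.Build R Rmult Rplus Rmult_plus_distr_r Rmult_plus_distr_l.

Section RealBigops.
Variables (I : finType) (P : pred I).

Lemma Rle_sum (F G : I -> R) :
  (forall i, P i -> F i <= G i) -> \rsum_(i : I | P i) F i <= \rsum_(i : I | P i) G i.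
Proof. by move=> FG; apply: (big_ind2 Rle) => // *; lra. Qed.

Lemma Rsum_ge0 (F : I -> R) : (forall i, P i -> 0 <= F i) -> 0 <= \rsum_(i : I | P i) F i.
Proof. by move=> F_ge0; apply: (big_ind (Rle 0)) => // *; lra. Qed.

Lemma Rprod_ge0 (F : I -> R) :
  (forall i, P i -> 0 <= F i) -> 0 <= \big[Rmult/1]_(i : I | P i) F i.
Proof. by move=> F_ge0; apply: (big_ind (Rle 0)) => // *; [lra | apply: Rmult_le_pos]. Qed.

Lemma Rle_prod (F G : I -> R) : (forall i, P i -> 0 <= F i <= G i) ->
  \big[Rmult/1]_(i : I | P i) F i <= \big[Rmult/1]_(i : I | P i) G i.
Proof.
move=> FG; suff [] : 0 <= \big[Rmult/1]_(i : I | P i) F i <= \big[Rmult/1]_(i : I | P i) G i by [].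
apply: (big_ind2 (fun a b => 0 <= a <= b)) => //; first lra.
by move=> a b c d [? ?] [? ?]; split; [apply: Rmult_le_pos | apply: Rmult_le_compat].
Qed.

Lemma Rsum_add (F G : I -> R) :
  \rsum_(i : I | P i) (F i + G i) = \rsum_(i : I | P i) F i + \rsum_(i : I | P i) G i.
Proof. exact: big_split. Qed.

Lemma exp_sum (F : I -> R) :
  exp (\rsum_(i : I | P i) F i) = \big[Rmult/1]_(i : I | P i) exp (F i).
Proof. exact: (big_morph exp exp_plus exp_0). Qed.

End RealBigops.

Lemma Rsum_const_ord n c : \rsum_(j : 'I_n) c = INR n * c.
Proof.
rewrite big_const_ord; elim: n => [|n IH]; first by rewrite /=; ring.
by rewrite S_INR iterS IH; ring.
Qed.

(** * Exponential inequalities *)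

Section ExpInequalities.
Import Coquelicot.Coquelicot.

Lemma le_of_derive_ge0 (f f' : R -> R) :
  (forall c, 0 <= c -> is_derive f c (f' c)) ->
  (forall c, 0 <= c -> 0 <= f' c) -> forall x, 0 <= x -> f 0 <= f x.
Proof.
move=> df f'_ge0 x x_ge0; have [->|x_neq0] := Req_dec x 0; first lra.
have [c [c_in mvt]] : exists c, f x - f 0 = f' c * (x - 0) /\ 0 < c < x.
  have [|c c_in|c [c_in mvt]] := MVT_cor2 f f' 0 x; [lra| |by exists c].
  by apply/is_derive_Reals/df; lra.
have := f'_ge0 c ltac:(lra); nra.
Qed.

Lemma exp_neg_le v : 0 <= v -> exp (- v) <= 1 - v + v ^ 2 / 2.
Proof.
move=> v_ge0; pose f v := 1 - v + v ^ 2 / 2 - exp (- v).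
suff : f 0 <= f v by rewrite /f /= Ropp_0 exp_0; lra.
apply: (le_of_derive_ge0 (f' := fun v => -1 + v + exp (- v))) => // c _.
- by rewrite /f; auto_derive; [|lra].
- by have := exp_ineq1_le (- c); lra.
Qed.

Lemma exp_mul_exp_opp x : exp x * exp (- x) = 1.
Proof. by rewrite -exp_plus Rplus_opp_r exp_0. Qed.

Lemma exp_sub1_sub_le x : 0 <= x -> exp x - 1 - x <= x ^ 2 / 2 * exp x.
Proof.
move=> x_ge0; pose f x := x ^ 2 / 2 * exp x - exp x + 1 + x.
suff : f 0 <= f x by rewrite /f /= exp_0; lra.
apply: (le_of_derive_ge0 (f' := fun x => exp x * (x + x ^ 2 / 2 - 1) + 1)) => // c c_ge0.
- by rewrite /f; auto_derive; [|lra].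
- have := exp_ineq1_le (- c); have := exp_mul_exp_opp c; have := exp_pos c.
  move=> /= ? ? ?; have : 0 <= exp c * (exp (- c) + c + c * (c * 1) / 2 - 1) by nra.
  nra.
Qed.

Lemma exp_sub1_sub_le_bernstein v k : 0 <= v -> 0 < k -> k <= 1 - v / 3 ->
  exp v - 1 - v <= v ^ 2 / (2 * k).
Proof.
move=> v_ge0 k_gt0 k_le.
have g_ge0 w : 0 <= w -> 0 <= 2 / 3 + w / 3 - exp w * (2 / 3 - w / 3).
  move=> w_ge0; pose g w := 2 / 3 + w / 3 - exp w * (2 / 3 - w / 3).
  suff : g 0 <= g w by rewrite /g exp_0; lra.
  apply: (le_of_derive_ge0 (f' := fun w => (1 - exp w * (1 - w)) / 3)) => // c _.
  - by rewrite /g; auto_derive; [|field].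
  - by have := exp_ineq1_le (- c); have := exp_mul_exp_opp c; have := exp_pos c; nra.
have bound : exp v * (1 - v / 3) <= 1 + 2 * v / 3 + v ^ 2 / 6.
  pose h v := 1 + 2 * v / 3 + v ^ 2 / 6 - exp v * (1 - v / 3).
  suff : h 0 <= h v by rewrite /h /= exp_0; lra.
  apply: (le_of_derive_ge0 (f' := fun w => 2 / 3 + w / 3 - exp w * (2 / 3 - w / 3))) => //.
  by move=> c _; rewrite /h; auto_derive; [|field].
have := exp_ineq1_le v; have : (exp v - 1 - v) * k <= v ^ 2 / 2 by nra.
move=> ? ?; apply: (Rmult_le_reg_r k) => //.
by replace (v ^ 2 / (2 * k) * k) with (v ^ 2 / 2) by (field; lra); lra.
Qed.

Lemma exp_le_exp_of_le {a b} : a <= b -> exp a <= exp b.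
Proof. by case=> [/exp_increasing /Rlt_le|->] //; apply: Rle_refl. Qed.

Lemma exp_four_fifths_ge2 : 2 <= exp (4 / 5).
Proof.
have -> : 4 / 5 = 1 / 5 + 1 / 5 + (1 / 5 + 1 / 5) by field.
rewrite !exp_plus; have := exp_ineq1_le (1 / 5) => ?.
have : 36 / 25 <= exp (1 / 5) * exp (1 / 5) by nra.
nra.
Qed.

Lemma one_add_exp_le_of_large m x : 0 < m -> 0 <= x -> 9 / 5 < m * exp (x - m) ->
  1 + exp (x - m) <= exp (9 / 10 * x ^ 2 / m).
Proof.
move=> m_gt0 x_ge0 large; set E := exp (x - m) in large *.
have E_gt0 : 0 < E by apply: exp_pos.
have E_mul : E * (1 - (x - m)) <= 1.
  by have := exp_ineq1_le (- (x - m)); have := exp_mul_exp_opp (x - m); rewrite -/E; nra.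
have c_expand : 9 / 10 * x ^ 2 / m = 9 / 10 * m + 9 / 5 * (x - m) + 9 / 10 * (x - m) ^ 2 / m.
  by field; lra.
have sq_ge0 : 0 <= (x - m) ^ 2 / m.
  by apply: Rmult_le_pos; [apply: pow2_ge_0 | apply/Rlt_le/Rinv_0_lt_compat].
case: (Rle_lt_dec m x) => [le_mx | lt_xm].
- have c_ge : 4 / 5 + (x - m) <= 9 / 10 * x ^ 2 / m.
    case: (Rle_lt_dec 1 (x - m)) => [|lt1]; first lra.
    have : 9 / 5 * (1 - (x - m)) <= m by nra.
    lra.
  have E_ge1 : 1 <= E by rewrite /E -exp_0; apply: exp_le_exp_of_le; lra.
  have := exp_le_exp_of_le c_ge; rewrite exp_plus -/E; have := exp_four_fifths_ge2; nra.
- have x_ge : m * E <= x by nra.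
  have c_ge : E <= 9 / 10 * x ^ 2 / m.
    have -> : 9 / 10 * x ^ 2 / m = 9 / 10 * (x / m) * x by field; lra.
    have : E <= x / m by apply: (Rmult_le_reg_l m) => //; field_simplify; lra.
    nra.
  by have := exp_ineq1_le (9 / 10 * x ^ 2 / m); lra.
Qed.

(* The never-activated term of the mgf: with m = n p_{n+1}(u), exp (- m) bounds the
   probability that u is never activated. *)
Lemma one_add_damped_exp_le m x : 0 < m -> 0 <= x ->
  1 + exp (- m) * (exp x - 1 - x) <= exp (9 / 10 * x ^ 2 / m).
Proof.
move=> m_gt0 x_ge0.
have eE : exp (- m) * exp x = exp (x - m) by rewrite -exp_plus; congr exp; ring.
have := exp_sub1_sub_le x_ge0; have := exp_ineq1_le x; have := exp_pos (- m) => ? ? ?.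
case: (Rle_lt_dec (m * exp (x - m)) (9 / 5)) => [small|large]; last first.
  by have := one_add_exp_le_of_large m_gt0 x_ge0 large; nra.
have : exp (- m) * (exp x - 1 - x) <= 9 / 10 * x ^ 2 / m.
  have -> : 9 / 10 * x ^ 2 / m = x ^ 2 / 2 * (9 / 5 / m) by field; lra.
  have : exp (x - m) <= 9 / 5 / m by apply: (Rmult_le_reg_l m) => //; field_simplify; lra.
  have := pow2_ge_0 x; nra.
by have := exp_ineq1_le (9 / 10 * x ^ 2 / m); lra.
Qed.

End ExpInequalities.

(** * Products of independent Bernoulli variables *)

Section BernoulliProduct.
Variable n : nat.
Implicit Types (q : 'I_n -> R) (x : {ffun 'I_n -> bool}).

Definition bern_weight q x : R := \rprod_(i : 'I_n) (if x i then q i else 1 - q i).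

Definition no_success x : bool := [forall i, ~~ x i].

Definition sole_success x (i : 'I_n) : bool := x i && [forall j, (j != i) ==> ~~ x j].

Lemma bern_weight_ge0 q x : (forall i, 0 <= q i <= 1) -> 0 <= bern_weight q x.
Proof. by move=> q_bound; apply: Rprod_ge0 => i _; have := q_bound i; case: (x i); lra. Qed.

Lemma sum_bern_weight_prod q (h : 'I_n -> bool -> R) :
  \rsum_(x : {ffun 'I_n -> bool}) (bern_weight q x * \rprod_(i : 'I_n) h i (x i)) =
  \rprod_(i : 'I_n) (q i * h i true + (1 - q i) * h i false).
Proof.
rewrite (eq_bigr (fun i => \rsum_(b : bool) ((if b then q i else 1 - q i) * h i b)));
  last by move=> i _; rewrite big_bool.
by rewrite bigA_distr_bigA; apply: eq_bigr => x _; rewrite -big_split.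
Qed.

Lemma sum_bern_weight q : \rsum_(x : {ffun 'I_n -> bool}) bern_weight q x = 1.
Proof.
have := sum_bern_weight_prod q (fun _ _ => 1); under eq_bigr do rewrite big1_eq Rmult_1_r.
by move=> ->; apply: big1 => i _; ring.
Qed.

Lemma sum_bern_weight_no_success q :
  \rsum_(x : {ffun 'I_n -> bool} | no_success x) bern_weight q x = \rprod_(i : 'I_n) (1 - q i).
Proof.
have no_successE x : (if no_success x then 1 else 0) = \rprod_(i : 'I_n) (if x i then 0 else 1).
  rewrite /no_success; case: forallP => [none | /forallP/forallPn [i /negPn xi]].
    by rewrite big1 // => i _; rewrite (negbTE (none i)).
  by rewrite (bigD1 i) //= xi Rmult_0_l.
rewrite big_mkcond (eq_bigr (fun x => bern_weight q x * (if no_success x then 1 else 0))).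
  under eq_bigr do rewrite no_successE.
  by rewrite (sum_bern_weight_prod q (fun _ b => if b then 0 else 1)); apply: eq_bigr => i _; ring.
by move=> x _; case: ifP => _; ring.
Qed.

Lemma sum_bern_weight_sole_success q i :
  \rsum_(x : {ffun 'I_n -> bool} | sole_success x i) bern_weight q x
  = q i * \big[Rmult/1]_(j : 'I_n | j != i) (1 - q j).
Proof.
pose h j (b : bool) : R := if j == i then (if b then 1 else 0) else (if b then 0 else 1).
have soleE x : (if sole_success x i then 1 else 0) = \rprod_(j : 'I_n) h j (x j).
  rewrite /sole_success /h; case xi: (x i) => /=; last by rewrite (bigD1 i) //= eqxx xi Rmult_0_l.
  case: forallP => [sole | /forallP/forallPn [j]] /=; last first.
    by rewrite negb_imply negbK => /andP [ji xj]; rewrite (bigD1 j) //= (negbTE ji) xj Rmult_0_l.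
  rewrite (bigD1 i) //= eqxx xi Rmult_1_l big1 // => j ji.
  by have := sole j; rewrite ji /= => /negbTE ->; rewrite (negbTE ji).
rewrite big_mkcond (eq_bigr (fun x => bern_weight q x * (if sole_success x i then 1 else 0))).
  under eq_bigr do rewrite soleE; rewrite (sum_bern_weight_prod q h) (bigD1 i) //= /h eqxx.
  by rewrite Rmult_1_r Rmult_0_r Rplus_0_r; congr (_ * _); apply: eq_bigr => j /negbTE ->; ring.
by move=> x _; case: ifP => _; ring.
Qed.

Lemma no_success_sole x i : no_success x -> sole_success x i = false.
Proof. by move=> /forallP none; rewrite /sole_success (negbTE (none i)). Qed.

Lemma sum_sole_success (d : 'I_n -> R) x :
  \rsum_(i : 'I_n) (if sole_success x i then d i else 0) =
  if [pick i | sole_success x i] is Some k then d k else 0.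
Proof.
case: pickP => [k sole_k | none]; last by apply: big1 => i _; rewrite none.
rewrite (bigD1 k) //= sole_k big1 ?Rplus_0_r // => i ik; case: ifP => // sole_i; exfalso.
move: sole_k sole_i => /andP [xk _] /andP [_ /forallP /(_ k)].
by rewrite eq_sym ik xk.
Qed.

(* The contribution of a node to R_n - \hat R_n, with s = p_{n+1}(u) and
   g i = gamma(n+1) / gamma(i+1). *)
Definition node_dev (s : R) (g : 'I_n -> R) x : R :=
  (if no_success x then s else 0)
  - / INR n * \rsum_(i : 'I_n) (if sole_success x i then g i else 0).

Lemma node_devE (phi : R -> R) s g x :
  phi (node_dev s g x) = phi 0 + (if no_success x then phi s - phi 0 else 0)
    + \rsum_(i : 'I_n) (if sole_success x i then phi (- (/ INR n * g i)) - phi 0 else 0).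
Proof.
rewrite /node_dev !sum_sole_success; case: pickP => [k sole_k | _].
  have -> : no_success x = false by apply: contraTF sole_k => /no_success_sole ->.
  by rewrite Rminus_0_l; ring.
by case: ifP => _; rewrite Rmult_0_r Rminus_0_r ?Rplus_0_r //; ring.
Qed.

Lemma sum_bern_weight_if q (E : pred {ffun 'I_n -> bool}) c :
  \rsum_(x : {ffun 'I_n -> bool}) (bern_weight q x * (if E x then c else 0)) =
  (\rsum_(x : {ffun 'I_n -> bool} | E x) bern_weight q x) * c.
Proof. by rewrite big_distrl [RHS]big_mkcond; apply: eq_bigr => x _ /=; case: ifP => _; ring. Qed.

Lemma node_mgfE q s g t :
  \rsum_(x : {ffun 'I_n -> bool}) (bern_weight q x * exp (t * node_dev s g x)) =
  1 + \rprod_(i : 'I_n) (1 - q i) * (exp (t * s) - 1)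
  + \rsum_(i : 'I_n) (q i * \big[Rmult/1]_(j : 'I_n | j != i) (1 - q j)
                      * (exp (t * - (/ INR n * g i)) - 1)).
Proof.
under eq_bigr do rewrite (node_devE (fun y => exp (t * y))) Rmult_0_r exp_0
  !Rmult_plus_distr_l Rmult_1_r big_distrr.
rewrite !big_split /= sum_bern_weight sum_bern_weight_if sum_bern_weight_no_success.
rewrite exchange_big /=; congr (_ + _); apply: eq_bigr => i _.
by rewrite sum_bern_weight_if sum_bern_weight_sole_success.
Qed.

End BernoulliProduct.

Section NodeMgfBounds.
Variables (n : nat) (q g : 'I_n -> R) (s : R).
Hypotheses (n_gt0 : (0 < n)%nat) (q_bound : forall i, 0 <= q i <= 1)
  (g_bound : forall i, 0 <= g i <= 1) (qg : forall i, q i * g i = s) (s_ge0 : 0 <= s).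

Let N := INR n.
Let pnone := \rprod_(i : 'I_n) (1 - q i).
Let pnone_except (i : 'I_n) := \big[Rmult/1]_(j : 'I_n | j != i) (1 - q j).

Let N_gt0 : 0 < N. Proof. exact/lt_0_INR/leP. Qed.

Let div_N_ge0 t : 0 <= t -> 0 <= t / N.
Proof. by move=> t_ge0; apply: Rmult_le_pos => //; apply/Rlt_le/Rinv_0_lt_compat. Qed.

Let pnone_ge0 : 0 <= pnone.
Proof. by apply: Rprod_ge0 => i _; have := q_bound i; lra. Qed.

Lemma pnone_except_bound i : 0 <= pnone_except i <= 1.
Proof.
split; first by apply: Rprod_ge0 => j _; have := q_bound j; lra.
apply: (Rle_trans _ (\big[Rmult/1]_(j : 'I_n | j != i) 1)); last by rewrite big1_eq; lra.
by apply: Rle_prod => j _; have := q_bound j; lra.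
Qed.

Lemma pnoneE i : pnone = (1 - q i) * pnone_except i.
Proof. by rewrite /pnone (bigD1 i). Qed.

Lemma pnone_le_except i : pnone <= pnone_except i.
Proof. by rewrite (pnoneE i); have := pnone_except_bound i; have := q_bound i; nra. Qed.

Lemma pnone_le_exp : pnone <= exp (- (N * s)).
Proof.
have s_le_q j : s <= q j by rewrite -(qg j); have := q_bound j; have := g_bound j; nra.
apply: (Rle_trans _ (\rprod_(j : 'I_n) exp (- q j))).
  by apply: Rle_prod => j _; have := q_bound j; have := exp_ineq1_le (- q j); lra.
rewrite -exp_sum -(big_morph Ropp Ropp_plus_distr Ropp_0) /N -Rsum_const_ord.
by apply/exp_le_exp_of_le/Ropp_le_contravar/Rle_sum => j _; exact: s_le_q.
Qed.

Lemma pnone_mul_le1 : pnone * (N * s) <= 1.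
Proof.
have := pnone_le_exp; have := exp_ineq1_le (N * s); have := exp_mul_exp_opp (N * s).
have := exp_pos (- (N * s)); have : 0 <= N * s by nra.
nra.
Qed.

Lemma pnone_add_sole_le1 : pnone + \rsum_(i : 'I_n) (q i * pnone_except i) <= 1.
Proof.
have indicator_le1 (x : {ffun 'I_n -> bool}) :
    (if no_success x then 1 else 0) + \rsum_(i : 'I_n) (if sole_success x i then 1 else 0) <= 1.
  rewrite sum_sole_success; case: pickP => [k sole_k | _]; last by case: ifP; lra.
  by rewrite (contraTF (fun Z => negbT (no_success_sole k Z)) sole_k); lra.
have -> : pnone + \rsum_(i : 'I_n) (q i * pnone_except i) =
    \rsum_(x : {ffun 'I_n -> bool}) (bern_weight q x * ((if no_success x then 1 else 0)
      + \rsum_(i : 'I_n) (if sole_success x i then 1 else 0))).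
  under [RHS]eq_bigr do rewrite Rmult_plus_distr_l big_distrr.
  rewrite big_split /= sum_bern_weight_if sum_bern_weight_no_success Rmult_1_r exchange_big /=.
  congr (_ + _); apply: eq_bigr => i _.
  by rewrite sum_bern_weight_if sum_bern_weight_sole_success Rmult_1_r.
rewrite -[X in _ <= X](sum_bern_weight q); apply: Rle_sum => x _.
rewrite -{2}(Rmult_1_r (bern_weight q x)).
by apply: Rmult_le_compat_l; [exact: bern_weight_ge0 | exact: indicator_le1].
Qed.

Lemma sum_pnone_except_le : \rsum_(i : 'I_n) pnone_except i <= 1 + N * pnone.
Proof.
have -> : \rsum_(i : 'I_n) pnone_except i =
    \rsum_(i : 'I_n) (q i * pnone_except i) + \rsum_(i : 'I_n) pnone.
  by rewrite -big_split; apply: eq_bigr => i _ /=; rewrite (pnoneE i); ring.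
by rewrite Rsum_const_ord -/N; have := pnone_add_sole_le1; have := pnone_ge0; lra.
Qed.

Lemma sole_term_le t i : 0 <= t ->
  q i * pnone_except i * (exp (t * - (/ N * g i)) - 1)
  <= - (t / N * s * pnone) + (t / N) ^ 2 * s / 2.
Proof.
move=> t_ge0; have [q_ge0 _] := q_bound i; have [g_ge0 g_le1] := g_bound i.
have [Q_ge0 Q_le1] := pnone_except_bound i; have tN_ge0 := div_N_ge0 t_ge0.
pose v := t / N * g i; have v_ge0 : 0 <= v by apply: Rmult_le_pos.
have -> : t * - (/ N * g i) = - v by rewrite /v /Rdiv; ring.
have : q i * pnone_except i * (exp (- v) - 1) <= q i * pnone_except i * (- v + v ^ 2 / 2).
  by apply: Rmult_le_compat_l; [apply: Rmult_le_pos | have := exp_neg_le v_ge0; lra].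
have : t / N * s * pnone <= t / N * s * pnone_except i.
  by apply: Rmult_le_compat_l; [apply: Rmult_le_pos | exact: pnone_le_except].
have : (t / N) ^ 2 * s * (pnone_except i * g i) <= (t / N) ^ 2 * s.
  have : 0 <= (t / N) ^ 2 * s by apply: Rmult_le_pos => //; apply: pow2_ge_0.
  have : pnone_except i * g i <= 1 by nra.
  nra.
have -> : q i * pnone_except i * (- v + v ^ 2 / 2) =
  - (t / N * s * pnone_except i) + (t / N) ^ 2 * s * (pnone_except i * g i) / 2.
  by rewrite /v -(qg i); field; lra.
lra.
Qed.

Lemma no_success_term_le t : 0 <= t ->
  1 + pnone * (exp (t * s) - 1 - t * s) <= exp (9 / 10 * t ^ 2 / N * s).
Proof.
move=> t_ge0; have ts_ge0 : 0 <= t * s by apply: Rmult_le_pos.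
have [s_gt0|<-] := Rle_lt_or_eq_dec _ _ s_ge0; last by rewrite !Rmult_0_r exp_0; lra.
have := one_add_damped_exp_le (Rmult_lt_0_compat _ _ N_gt0 s_gt0) ts_ge0.
have -> : 9 / 10 * (t * s) ^ 2 / (N * s) = 9 / 10 * t ^ 2 / N * s by field; lra.
have : pnone * (exp (t * s) - 1 - t * s) <= exp (- (N * s)) * (exp (t * s) - 1 - t * s).
  apply: Rmult_le_compat_r; last exact: pnone_le_exp.
  by have := exp_ineq1_le (t * s); lra.
lra.
Qed.

Lemma node_mgf_le t : 0 <= t ->
  \rsum_(x : {ffun 'I_n -> bool}) (bern_weight q x * exp (t * node_dev s g x))
  <= exp (7 / 5 * t ^ 2 / N * s).
Proof.
move=> t_ge0; rewrite node_mgfE -/N -/pnone.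
have sole_le : \rsum_(i : 'I_n) (q i * pnone_except i * (exp (t * - (/ N * g i)) - 1))
    <= - (t * s * pnone) + t ^ 2 * s / (2 * N).
  apply: (Rle_trans _ _ _ (Rle_sum (fun i _ => sole_term_le i t_ge0))).
  by rewrite Rsum_const_ord -/N; right; field; lra.
apply: (Rle_trans _ _ _ (Rplus_le_compat_l _ _ _ sole_le)).
have -> : 7 / 5 * t ^ 2 / N * s = 9 / 10 * t ^ 2 / N * s + t ^ 2 * s / (2 * N) by field; lra.
have := no_success_term_le t_ge0.
set c1 := 9 / 10 * t ^ 2 / N * s; set c2 := t ^ 2 * s / (2 * N) => no_success_le.
have c1_ge0 : 0 <= c1 by apply: Rmult_le_pos => //; apply: div_N_ge0; nra.
have c2_ge0 : 0 <= c2 by apply: Rmult_le_pos; [nra | apply/Rlt_le/Rinv_0_lt_compat; lra].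
have exp_add_le : exp c1 + c2 <= exp c1 * exp c2.
  by have := exp_ineq1_le c2; have := exp_ineq1_le c1; nra.
have : pnone * (exp (t * s) - 1) = pnone * (exp (t * s) - 1 - t * s) + t * s * pnone by ring.
rewrite exp_plus; lra.
Qed.

Let bernstein_denom_bound t : 0 <= t -> t < 3 * N -> 0 < 1 - t / (3 * N) <= 1.
Proof.
move=> t_ge0 t_lt; have : 0 <= t / (3 * N) < 1; last lra.
split; first by apply: Rmult_le_pos => //; apply/Rlt_le/Rinv_0_lt_compat; lra.
by apply: (Rmult_lt_reg_r (3 * N)); [lra | field_simplify; lra].
Qed.

Lemma sole_term_opp_le t i : 0 <= t -> t < 3 * N ->
  q i * pnone_except i * (exp (- t * - (/ N * g i)) - 1)
  <= t / N * s * pnone_except i + (t / N) ^ 2 * s / (2 * (1 - t / (3 * N))).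
Proof.
move=> t_ge0 t_lt; have [q_ge0 _] := q_bound i; have [g_ge0 g_le1] := g_bound i.
have [Q_ge0 Q_le1] := pnone_except_bound i; have tN_ge0 := div_N_ge0 t_ge0.
have [k_gt0 _] := bernstein_denom_bound t_ge0 t_lt.
pose v := t / N * g i; have v_ge0 : 0 <= v by apply: Rmult_le_pos.
have k_le : 1 - t / (3 * N) <= 1 - v / 3.
  have : v <= t / N by rewrite /v; nra.
  have -> : t / (3 * N) = t / N / 3 by field; lra.
  lra.
have -> : - t * - (/ N * g i) = v by rewrite /v /Rdiv; ring.
have c_ge0 : 0 <= (t / N) ^ 2 * s / (2 * (1 - t / (3 * N))).
  apply: Rmult_le_pos; first by apply: Rmult_le_pos => //; apply: pow2_ge_0.
  by apply/Rlt_le/Rinv_0_lt_compat; lra.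
have : q i * pnone_except i * (exp v - 1)
    <= q i * pnone_except i * (v + v ^ 2 / (2 * (1 - t / (3 * N)))).
  apply: Rmult_le_compat_l; first exact: Rmult_le_pos.
  by have := exp_sub1_sub_le_bernstein v_ge0 k_gt0 k_le; lra.
have -> : q i * pnone_except i * (v + v ^ 2 / (2 * (1 - t / (3 * N)))) =
  t / N * s * pnone_except i + (t / N) ^ 2 * s / (2 * (1 - t / (3 * N))) * (pnone_except i * g i).
  by rewrite /v -(qg i); field; lra.
have : pnone_except i * g i <= 1 by nra.
nra.
Qed.

Lemma sole_terms_opp_le t : 0 <= t -> t < 3 * N ->
  \rsum_(i : 'I_n) (q i * pnone_except i * (exp (- t * - (/ N * g i)) - 1))
  <= t / N * s * (1 + N * pnone) + t ^ 2 * s / (2 * N * (1 - t / (3 * N))).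
Proof.
move=> t_ge0 t_lt; have [k_gt0 _] := bernstein_denom_bound t_ge0 t_lt.
apply: (Rle_trans _ _ _ (Rle_sum (fun i _ => sole_term_opp_le i t_ge0 t_lt))).
rewrite Rsum_add Rsum_const_ord -big_distrr -/N.
have -> : N * ((t / N) ^ 2 * s / (2 * (1 - t / (3 * N))))
  = t ^ 2 * s / (2 * N * (1 - t / (3 * N))) by field; lra.
apply/Rplus_le_compat_r/Rmult_le_compat_l; last exact: sum_pnone_except_le.
by apply: Rmult_le_pos => //; exact: div_N_ge0.
Qed.

Lemma no_success_term_opp_le t : 0 <= t ->
  pnone * (exp (- t * s) - 1) <= - (t * s * pnone) + t ^ 2 * s / (2 * N).
Proof.
move=> t_ge0; have ts_ge0 : 0 <= t * s by apply: Rmult_le_pos.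
have c_ge0 : 0 <= t ^ 2 * s / (2 * N).
  by apply: Rmult_le_pos; [nra | apply/Rlt_le/Rinv_0_lt_compat; lra].
have -> : - t * s = - (t * s) by ring.
have : pnone * (exp (- (t * s)) - 1) <= pnone * (- (t * s) + (t * s) ^ 2 / 2).
  by apply: Rmult_le_compat_l => //; have := exp_neg_le ts_ge0; lra.
have -> : pnone * (- (t * s) + (t * s) ^ 2 / 2) =
  - (t * s * pnone) + t ^ 2 * s / (2 * N) * (pnone * (N * s)) by field; lra.
by have := Rmult_le_compat_l _ _ _ c_ge0 pnone_mul_le1; lra.
Qed.

Lemma node_mgf_opp_le t : 0 <= t -> t < 3 * N ->
  \rsum_(x : {ffun 'I_n -> bool}) (bern_weight q x * exp (- t * node_dev s g x))
  <= exp ((t / N + t ^ 2 / (N * (1 - t / (3 * N)))) * s).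
Proof.
move=> t_ge0 t_lt; rewrite node_mgfE -/N -/pnone.
have := sole_terms_opp_le t_ge0 t_lt; have := no_success_term_opp_le t_ge0.
have := bernstein_denom_bound t_ge0 t_lt.
set k := 1 - t / (3 * N) => -[k_gt0 k_le1] no_success_le sole_le.
apply: (Rle_trans _ _ _ (Rplus_le_compat_l _ _ _ sole_le)).
apply: (Rle_trans _ (1 + ((t / N + t ^ 2 / (N * k)) * s))); last exact: exp_ineq1_le.
have : t ^ 2 * s / (2 * N) <= t ^ 2 * s / (2 * N * k).
  apply: Rmult_le_compat_l; first nra.
  by apply: Rinv_le_contravar; nra.
have -> : (t / N + t ^ 2 / (N * k)) * s = t / N * s + 2 * (t ^ 2 * s / (2 * N * k)) by field; lra.
have : t / N * s * (1 + N * pnone) = t / N * s + t * s * pnone by field; lra.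
lra.
Qed.

End NodeMgfBounds.

(** * The fatigue model *)

Definition slice (A : finType) n (w : outcome A n) (u : A) : {ffun 'I_n -> bool} :=
  [ffun i => w (i, u)].

Lemma sum_prod_slice (A : finType) n (H : A -> {ffun 'I_n -> bool} -> R) :
  \rsum_(w : outcome A n) \rprod_(u : A) H u (slice w u) =
  \rprod_(u : A) \rsum_(x : {ffun 'I_n -> bool}) H u x.
Proof.
rewrite bigA_distr_bigA (reindex (fun f : {ffun A -> {ffun 'I_n -> bool}} =>
  ([ffun iu : 'I_n * A => f iu.2 iu.1] : outcome A n))) /=.
  apply: eq_bigr => f _; apply: eq_bigr => u _; congr (H u _).
  by apply/ffunP => i; rewrite !ffunE.
apply: onW_bij; exists (fun w : outcome A n => [ffun u => slice w u]).
  by move=> f; apply/ffunP => u; apply/ffunP => i; rewrite !ffunE.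
by move=> w; apply/ffunP => -[i u]; rewrite !ffunE.
Qed.

Section FatigueModel.
Variables (A : finType) (p : A -> R) (gamma : nat -> R) (n : nat).
Hypotheses (hp : forall u, 0 <= p u <= 1)
  (hgamma : forall i, (1 <= i)%nat -> 0 < gamma i <= 1)
  (hmono : forall i j, (1 <= i)%nat -> (i <= j)%nat -> gamma j <= gamma i)
  (hn : (1 <= n)%nat).

Let q (u : A) (i : 'I_n) := Defs.pi p gamma i.+1 u.
Let s (u : A) := Defs.pi p gamma n.+1 u.
Let g (i : 'I_n) := gamma n.+1 / gamma i.+1.

Let q_bound u i : 0 <= q u i <= 1.
Proof. by rewrite /q /Defs.pi; have := hp u; have := @hgamma i.+1 isT; nra. Qed.

Let s_ge0 u : 0 <= s u.
Proof. by rewrite /s /Defs.pi; have := hp u; have := @hgamma n.+1 isT; nra. Qed.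

Let g_bound i : 0 <= g i <= 1.
Proof.
have [g_gt0 _] := @hgamma n.+1 isT; have [gi_gt0 _] := @hgamma i.+1 isT.
have := @hmono i.+1 n.+1 isT (ltnW (ltn_ord i)) => g_le.
split; first by apply: Rmult_le_pos; [lra | apply/Rlt_le/Rinv_0_lt_compat].
by apply: (Rmult_le_reg_l (gamma i.+1)) => //; rewrite /g; field_simplify; lra.
Qed.

Let qg u i : q u i * g i = s u.
Proof. by rewrite /q /g /s /Defs.pi /=; have [? _] := @hgamma i.+1 isT; field; lra. Qed.

Lemma weightE (w : outcome A n) :
  weight p gamma w = \rprod_(u : A) bern_weight (q u) (slice w u).
Proof.
pose F (i : 'I_n) (u : A) := if w (i, u) then q u i else 1 - q u i.
rewrite /weight (eq_bigr (fun iu => F iu.1 iu.2)); last by case.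
rewrite -(pair_bigA _ F) exchange_big; apply: eq_bigr => u _; apply: eq_bigr => i _.
by rewrite ffunE.
Qed.

Lemma sum_weight_prod (H : A -> {ffun 'I_n -> bool} -> R) :
  \rsum_(w : outcome A n) (weight p gamma w * \rprod_(u : A) H u (slice w u)) =
  \rprod_(u : A) \rsum_(x : {ffun 'I_n -> bool}) (bern_weight (q u) x * H u x).
Proof.
rewrite -sum_prod_slice; apply: eq_bigr => w _.
by rewrite weightE -big_split.
Qed.

Lemma weight_ge0 (w : outcome A n) : 0 <= weight p gamma w.
Proof. by rewrite weightE; apply: Rprod_ge0 => u _; exact: bern_weight_ge0. Qed.

Lemma deviationE (w : outcome A n) :
  Rn p gamma w - Rhat gamma w = \rsum_(u : A) node_dev (s u) g (slice w u).
Proof.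
rewrite /Rn /Rhat big_distrr /Rminus (big_morph Ropp Ropp_plus_distr Ropp_0) -big_split.
apply: eq_bigr => u _; rewrite /node_dev /no_success /Ugam.
have -> : [forall i, ~~ slice w u i] = Zn w u by apply: eq_forallb => i; rewrite ffunE.
congr (_ + - (_ * _)); apply: eq_bigr => i _; rewrite /sole_success ffunE.
by congr (if _ && _ then _ else _); apply: eq_forallb => j; rewrite ffunE.
Qed.

Lemma sum_weight : \rsum_(w : outcome A n) weight p gamma w = 1.
Proof.
transitivity (\rsum_(w : outcome A n) (weight p gamma w * \rprod_(u : A) 1)).
  by apply: eq_bigr => w _; rewrite big1_eq Rmult_1_r.
rewrite (sum_weight_prod (fun _ _ => 1)); apply: big1 => u _.
by under eq_bigr do rewrite Rmult_1_r; exact: sum_bern_weight.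
Qed.

Lemma mgf_deviation_le_of_nodes t c :
  (forall u, \rsum_(x : {ffun 'I_n -> bool}) (bern_weight (q u) x * exp (t * node_dev (s u) g x))
     <= exp (c * s u)) ->
  \rsum_(w : outcome A n) (weight p gamma w * exp (t * (Rn p gamma w - Rhat gamma w)))
  <= exp (c * lambda_m p gamma n.+1).
Proof.
move=> node_le; under eq_bigr do rewrite deviationE big_distrr exp_sum.
rewrite (sum_weight_prod (fun u x => exp (t * node_dev (s u) g x))).
have -> : c * lambda_m p gamma n.+1 = \rsum_(u : A) (c * s u).
  by rewrite /lambda_m /lambda !big_distrr.
rewrite exp_sum; apply: Rle_prod => u _; split; last exact: node_le.
by apply: Rsum_ge0 => x _; apply: Rmult_le_pos; [exact: bern_weight_ge0 | exact/Rlt_le/exp_pos].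
Qed.

Lemma probE (E : outcome A n -> bool) :
  prob p gamma E = \rsum_(w : outcome A n) (if E w then weight p gamma w else 0).
Proof. exact: big_mkcond. Qed.

Lemma mgf_deviation_le t : 0 <= t ->
  \rsum_(w : outcome A n) (weight p gamma w * exp (t * (Rn p gamma w - Rhat gamma w)))
  <= exp (7 / 5 * t ^ 2 / INR n * lambda_m p gamma n.+1).
Proof. by move=> t_ge0; apply: mgf_deviation_le_of_nodes => u; exact: node_mgf_le. Qed.

Lemma mgf_opp_deviation_le t : 0 <= t -> t < 3 * INR n ->
  \rsum_(w : outcome A n) (weight p gamma w * exp (- t * (Rn p gamma w - Rhat gamma w)))
  <= exp ((t / INR n + t ^ 2 / (INR n * (1 - t / (3 * INR n)))) * lambda_m p gamma n.+1).
Proof. by move=> t_ge0 t_lt; apply: mgf_deviation_le_of_nodes => u; exact: node_mgf_opp_le. Qed.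

Lemma prob_le_exp_markov (E : outcome A n -> bool) (X : outcome A n -> R) a :
  (forall w, E w -> a <= X w) ->
  prob p gamma E <= exp (- a) * \rsum_(w : outcome A n) (weight p gamma w * exp (X w)).
Proof.
move=> EX; rewrite probE big_distrr; apply: Rle_sum => w _ /=.
rewrite -Rmult_assoc (Rmult_comm (exp (- a))) Rmult_assoc -exp_plus.
have := weight_ge0 w; have := exp_pos (- a + X w).
case: ifP => [/EX aX | _]; last by nra.
by have := exp_ineq1_le (- a + X w); nra.
Qed.

Lemma prob_and_ge (E F : outcome A n -> bool) :
  1 - prob p gamma (fun w => ~~ E w) - prob p gamma (fun w => ~~ F w)
  <= prob p gamma (fun w => E w && F w).
Proof.
suff : 1 <= prob p gamma (fun w => E w && F w) + prob p gamma (fun w => ~~ E w)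
  + prob p gamma (fun w => ~~ F w) by lra.
rewrite -sum_weight !probE -!Rsum_add; apply: Rle_sum => w _.
by have := weight_ge0 w; case: (E w); case: (F w) => /=; lra.
Qed.

Lemma weight_le_prob (E : outcome A n -> bool) w : E w -> weight p gamma w <= prob p gamma E.
Proof.
move=> Ew; rewrite /prob (bigD1 w) //= -{1}(Rplus_0_r (weight p gamma w)).
by apply/Rplus_le_compat_l/Rsum_ge0 => v _; exact: weight_ge0.
Qed.

End FatigueModel.

(** * Tail bounds *)

Lemma RlebP x y : reflect (x <= y) (Rleb x y).
Proof. by rewrite /Rleb; case: Rle_dec => xy; constructor. Qed.

(* [t = 2L/b] is not the optimal choice, but unlike the optimum it does not need La > 0. *)
Lemma upper_exponent_le b La N L : 0 < b -> 0 < N -> 0 <= L ->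
  28 / 5 * La * L / N <= b ^ 2 ->
  exists2 t, 0 <= t & - (t * b) + 7 / 5 * t ^ 2 / N * La <= - L.
Proof.
move=> b_gt0 N_gt0 L_ge0 b_ge; exists (2 * L / b).
  by apply: Rmult_le_pos; [lra | apply/Rlt_le/Rinv_0_lt_compat].
have -> : - (2 * L / b * b) + 7 / 5 * (2 * L / b) ^ 2 / N * La
    = - 2 * L + L * (28 / 5 * La * L / N / b ^ 2) by field; lra.
have : 28 / 5 * La * L / N / b ^ 2 <= 1.
  apply: (Rmult_le_reg_r (b ^ 2)); first exact: pow_lt.
  have -> : 28 / 5 * La * L / N / b ^ 2 * b ^ 2 = 28 / 5 * La * L / N by field; lra.
  lra.
nra.
Qed.

(* The usual Bernstein choice of [t]; it degenerates to [t = 3N] when La = 0, which is why the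
   case lambda = 0 is treated separately. *)
Lemma lower_exponent_le a La N L : 0 < La -> 0 < N -> 0 <= a -> 4 * La * L / N <= a ^ 2 ->
  exists2 t, 0 <= t < 3 * N &
    - (t * (a + / (3 * N) * L)) + t ^ 2 / (N * (1 - t / (3 * N))) * La <= - L.
Proof.
move=> La_gt0 N_gt0 a_ge0 a_ge.
have den_gt0 : 0 < 2 * La / N + a / (3 * N).
  have : 0 < 2 * La / N by apply: Rmult_lt_0_compat; [lra | apply: Rinv_0_lt_compat].
  have : 0 <= a / (3 * N) by apply: Rmult_le_pos; [lra | apply/Rlt_le/Rinv_0_lt_compat; lra].
  lra.
pose t := a / (2 * La / N + a / (3 * N)).
have t3N : t / (3 * N) = a / (6 * La + a) by rewrite /t; field; lra.
exists t; first split.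
- by apply: Rmult_le_pos; [lra | apply/Rlt_le/Rinv_0_lt_compat].
- have : a / (6 * La + a) < 1.
    by apply: (Rmult_lt_reg_r (6 * La + a)); [lra | field_simplify; lra].
  rewrite -t3N => lt1.
  have -> : t = t / (3 * N) * (3 * N) by field; lra.
  by have := Rmult_lt_compat_r (3 * N) _ _ ltac:(lra) lt1; lra.
suff : - (t * (a + / (3 * N) * L)) + t ^ 2 / (N * (1 - t / (3 * N))) * La + L <= 0 by lra.
have -> : - (t * (a + / (3 * N) * L)) + t ^ 2 / (N * (1 - t / (3 * N))) * La + L
    = (L * (2 * La / N) - a ^ 2 / 2) / (2 * La / N + a / (3 * N)).
  rewrite t3N /t; field; split; try lra; split; try lra; nra.
have : L * (2 * La / N) - a ^ 2 / 2 <= 0.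
  have -> : L * (2 * La / N) = 4 * La * L / N / 2 by field; lra.
  lra.
have := Rinv_0_lt_compat _ den_gt0; rewrite /Rdiv; nra.
Qed.

Lemma lambda_ge0 (A : finType) (p : A -> R) : (forall u, 0 <= p u) -> 0 <= lambda p.
Proof. by move=> p_ge0; apply: Rsum_ge0 => u _. Qed.

Section DeviationBound.
Variables (A : finType) (p : A -> R) (gamma : nat -> R) (n : nat) (delta : R).
Hypotheses (hp : forall u, 0 <= p u <= 1)
  (hgamma : forall i, (1 <= i)%nat -> 0 < gamma i <= 1)
  (hmono : forall i j, (1 <= i)%nat -> (i <= j)%nat -> gamma j <= gamma i)
  (hn : (1 <= n)%nat) (hdelta : 0 < delta < 1).

Let N := INR n.
Let L := ln (4 / delta).
Let La := lambda_m p gamma n.+1.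

Let N_gt0 : 0 < N. Proof. exact/lt_0_INR/leP. Qed.

Let L_gt0 : 0 < L.
Proof.
rewrite /L -ln_1; apply: ln_increasing; first lra.
by apply: (Rmult_lt_reg_r delta); [lra | field_simplify; lra].
Qed.

Let exp_opp_L : exp (- L) = delta / 4.
Proof.
rewrite exp_Ropp exp_ln; first by field; lra.
by apply: Rmult_lt_0_compat; [lra | apply: Rinv_0_lt_compat; lra].
Qed.

Let p_ge0 u : 0 <= p u. Proof. by have [] := hp u. Qed.

Let La_ge0 : 0 <= La.
Proof. by have [? _] := @hgamma n.+1 isT; apply: Rmult_le_pos; [lra | exact: lambda_ge0]. Qed.

Let La_le_lambda : La <= lambda p.
Proof. by have := lambda_ge0 p_ge0; have [? ?] := @hgamma n.+1 isT; rewrite /La /lambda_m; nra. Qed.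

Let a := (1 + sqrt 2) * sqrt (La * L / N).

Let a_ge0 : 0 <= a.
Proof. by apply: Rmult_le_pos; [have := sqrt_pos 2 | have := sqrt_pos (La * L / N)]; lra. Qed.

Let a_sq_ge : 28 / 5 * (La * L / N) <= a ^ 2.
Proof.
have LaLN_ge0 : 0 <= La * L / N.
  apply: Rmult_le_pos; last exact/Rlt_le/Rinv_0_lt_compat.
  by apply: Rmult_le_pos; [exact: La_ge0 | lra].
have sqrt2_ge : 7 / 5 <= sqrt 2.
  have := sqrt_pos 2; have := sqrt_sqrt 2 ltac:(lra).
  by case: (Rle_lt_dec (7 / 5) (sqrt 2)) => //; nra.
rewrite /a Rpow_mult_distr [sqrt _ ^ 2]/= Rmult_1_r sqrt_sqrt //.
by apply: Rmult_le_compat_r => //; nra.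
Qed.

Let betaE : beta p gamma n delta = a + / (3 * N) * L.
Proof. by []. Qed.

Let L_div_3N_gt0 : 0 < / (3 * N) * L.
Proof. by apply: Rmult_lt_0_compat => //; apply: Rinv_0_lt_compat; lra. Qed.

Lemma upper_tail :
  prob p gamma (fun w : outcome A n =>
    ~~ Rleb (Rn p gamma w - Rhat gamma w) (beta p gamma n delta)) <= delta / 4.
Proof.
set b := beta p gamma n delta.
have b_gt0 : 0 < b by rewrite /b betaE; have := L_div_3N_gt0; lra.
have b_sq : 28 / 5 * La * L / N <= b ^ 2.
  have -> : 28 / 5 * La * L / N = 28 / 5 * (La * L / N) by rewrite /Rdiv; ring.
  by rewrite /b betaE; have := a_sq_ge; have := L_div_3N_gt0; nra.
have [t t_ge0 exponent_le] := upper_exponent_le b_gt0 N_gt0 (Rlt_le _ _ L_gt0) b_sq.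
apply: (Rle_trans _ _ _ (prob_le_exp_markov hp hgamma (a := t * b)
  (X := fun w => t * (Rn p gamma w - Rhat gamma w)) _)).
  by move=> w /RlebP /Rnot_le_lt lt_b; apply: Rmult_le_compat_l => //; lra.
apply: (Rle_trans _ (exp (- (t * b)) * exp (7 / 5 * t ^ 2 / N * La))).
  by apply: Rmult_le_compat_l; [exact/Rlt_le/exp_pos | exact: mgf_deviation_le].
by rewrite -exp_plus -exp_opp_L; exact: exp_le_exp_of_le.
Qed.

Lemma lower_tail : 0 < lambda p ->
  prob p gamma (fun w : outcome A n =>
    ~~ Rleb (- beta p gamma n delta - lambda p / N) (Rn p gamma w - Rhat gamma w)) <= delta / 4.
Proof.
move=> lambda_gt0.
have La_gt0 : 0 < La by have [? _] := @hgamma n.+1 isT; apply: Rmult_lt_0_compat.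
have a_sq : 4 * La * L / N <= a ^ 2.
  have -> : 4 * La * L / N = 4 * (La * L / N) by rewrite /Rdiv; ring.
  have : 0 <= La * L / N by apply: Rmult_le_pos; [nra | apply/Rlt_le/Rinv_0_lt_compat].
  by have := a_sq_ge; lra.
have [t [t_ge0 t_lt] exponent_le] := lower_exponent_le La_gt0 N_gt0 a_ge0 a_sq.
apply: (Rle_trans _ _ _ (prob_le_exp_markov hp hgamma
  (a := t * (beta p gamma n delta + lambda p / N))
  (X := fun w => - t * (Rn p gamma w - Rhat gamma w)) _)).
  by move=> w /RlebP /Rnot_le_lt lt_lo; rewrite -/N; nra.
apply: (Rle_trans _ (exp (- (t * (beta p gamma n delta + lambda p / N)))
  * exp ((t / N + t ^ 2 / (N * (1 - t / (3 * N)))) * La))).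
  by apply: Rmult_le_compat_l; [exact/Rlt_le/exp_pos | exact: mgf_opp_deviation_le].
rewrite -exp_plus -exp_opp_L; apply: exp_le_exp_of_le.
have : t / N * La <= t / N * lambda p.
  apply: Rmult_le_compat_l; last exact: La_le_lambda.
  by apply: Rmult_le_pos => //; apply/Rlt_le/Rinv_0_lt_compat.
rewrite betaE; lra.
Qed.

Lemma deviation_event_lambda0 : lambda p = 0 ->
  1 <= prob p gamma (fun w : outcome A n =>
    Rleb (- beta p gamma n delta - lambda p / N) (Rn p gamma w - Rhat gamma w)
    && Rleb (Rn p gamma w - Rhat gamma w) (beta p gamma n delta)).
Proof.
move=> lambda0.
have p0 u : p u = 0.
  apply: Rle_antisym => //; move: lambda0; rewrite /lambda (bigD1 u) //=.
  have : 0 <= \rsum_(v : A | v != u) p v by apply: Rsum_ge0.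
  lra.
pose w0 : outcome A n := [ffun => false].
have weight_w0 : weight p gamma w0 = 1.
  by apply: big1 => iu _; rewrite ffunE /Defs.pi p0; ring.
have deviation_w0 : Rn p gamma w0 - Rhat gamma w0 = 0.
  rewrite /Rn /Rhat big1 => [|u _]; last by rewrite /Defs.pi p0 Rmult_0_r; case: ifP.
  rewrite big1 => [|u _]; first ring.
  by rewrite /Ugam big1 // => i _; rewrite ffunE.
rewrite -weight_w0; apply: (weight_le_prob hp hgamma) => /=.
rewrite deviation_w0 lambda0 /Rdiv Rmult_0_l betaE; have := L_div_3N_gt0.
by move=> ?; apply/andP; split; apply/RlebP; lra.
Qed.

End DeviationBound.

Theorem theorem3 (A : finType) (p : A -> R) (gamma : nat -> R)
  (hp : forall u, 0 <= p u <= 1)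
  (hgamma : forall i, (1 <= i)%nat -> 0 < gamma i <= 1)
  (hmono : forall i j, (1 <= i)%nat -> (i <= j)%nat -> gamma j <= gamma i)
  (n : nat) (hn : (1 <= n)%nat) (delta : R) (hdelta : 0 < delta < 1) :
  prob p gamma
    (fun w : outcome A n =>
       Rleb (- beta p gamma n delta - lambda p / INR n)
            (Rn p gamma w - Rhat gamma w)
       && Rleb (Rn p gamma w - Rhat gamma w) (beta p gamma n delta))
  >= 1 - delta.
Proof.
apply: Rle_ge; have p_ge0 u : 0 <= p u by have [] := hp u.
have [lambda_gt0 | lambda0] := Rle_lt_or_eq_dec _ _ (lambda_ge0 p_ge0).
- have := prob_and_ge hp hgamma
    (fun w : outcome A n =>
       Rleb (- beta p gamma n delta - lambda p / INR n) (Rn p gamma w - Rhat gamma w))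
    (fun w => Rleb (Rn p gamma w - Rhat gamma w) (beta p gamma n delta)).
  have := upper_tail hp hgamma hmono hn hdelta.
  have := lower_tail hp hgamma hmono hn hdelta lambda_gt0.
  lra.
- have := deviation_event_lambda0 hp hgamma hn hdelta (esym lambda0).
  lra.
Qed.
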